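(* Consider the DS-PSRL algorithm run on a parametrized MDP with scalar parameter satisfying the Lipschitz condition: there is $C$ with $\|P(\cdot\mid x,a,\theta)-P(\cdot\mid x,a,\theta')\|_1\le C|\theta-\theta'|$ for all $x,a$ and $\theta,\theta'\in\Theta\subseteq\mathbb{R}$, and whose differential value functions satisfy $h(x,\theta)\in[0,H]$. Let $m$ be the number of episodes up to time $T$, $M_j$ the number of steps in the $j$-th episode, and $\widetilde\theta_j$ the parameter sampled for episode $j$. Then \[ \mathbb{E}\Big[\sum_{t=1}^T\Delta_t\Big]\le CH\sqrt{T\,\mathbb{E}\Big[\sum_{j=1}^m M_j|\theta_*-\widetilde\theta_j|^2\Big]}. \]
   Context: Setting: parametrized MDP with state space $\mathcal{X}$, action space $\mathcal{A}$, known loss, known transition kernels $P(\cdot\mid x,a,\theta)$, unknown true parameter $\theta_*$ drawn from a known prior. $h(\cdot,\theta)$ is the differential value function of the average-cost Bellman optimality equation for parameter $\theta$. DS-PSRL: set $L=1$; at each $t$, if $t=L$ sample $\widetilde\theta_t$ from the current posterior and set $L\leftarrow2L$, else keep $\widetilde\theta_t=\widetilde\theta_{t-1}$; play the optimal action $a_t$ for parameter $\widetilde\theta_t$ at state $x_t$; observe $x_{t+1}\sim P(\cdot\mid x_t,a_t,\theta_* )$; update the posterior. An episode is a maximal run of steps with the same sampled parameter. With $h_t=h(\cdot,\widetilde\theta_t)$, define $\Delta_t=\int_{\mathcal{X}}\big(P(x\mid x_t,a_t,\theta_* )-P(x\mid x_t,a_t,\widetilde\theta_t)\big)h_t(x)\,dx$.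 *)

From HB Require Import structures.
From mathcomp Require Import all_boot all_order all_algebra.
From mathcomp Require Import all_classical all_reals all_analysis.
Set Implicit Arguments. Unset Strict Implicit. Unset Printing Implicit Defensive.
Import Order.TTheory GRing.Theory Num.Theory.
Local Open Scope ring_scope.

(* DS-PSRL doubling schedule: sampling times are t = 1, 2, 4, 8, ...
   The episode containing time t >= 1 is j = trunc_log 2 t, i.e. the
   episode j consists of the times t with 2^j <= t < 2^(j+1). *)
Definition episode_of (t : nat) : nat := trunc_log 2 t.

Definition num_episodes (T : nat) : nat := (trunc_log 2 T).+1.

Definition episode_length (T j : nat) : nat :=
  (\sum_(1 <= t < T.+1) (episode_of t == j))%N.

(* Delta_t = \int (P(x | x_t,a_t,theta_* ) - P(x | x_t,a_t,theta~_t)) h(x,theta~_t) dx,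
   P x a th : X -> R is the density of the next state w.r.t. the reference
   measure mu ("dx"). *)
Definition Delta {d} {X : measurableType d} {R : realType} {A : Type}
  (mu : {measure set X -> \bar R}) (P : X -> A -> R -> X -> R)
  (h : X -> R -> R) (xt : X) (at_ : A) (th_star th : R) : R :=
  Rintegral mu setT (fun y => (P xt at_ th_star y - P xt at_ th y) * h y th).

From HB Require Import structures.
From mathcomp Require Import all_boot all_order all_algebra.
From mathcomp Require Import all_classical all_reals all_analysis.
From mathcomp Require Import ring lra measurable_realfun.
Import Order.TTheory GRing.Theory Num.Theory.
Local Open Scope ring_scope.

(* Since h(., theta) takes values in [0, H], |Delta_t| is at most H times the
   L1 distance between the true and sampled kernels, hence at most
   C H |theta_star - theta_t|.  Every step of episode j uses the parameter
   sampled at time 2^j, so sum_j M_j |theta_star - theta_j|^2 is the sum of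
   |theta_star - theta_t|^2 over the steps.  With y_t = theta_star - theta_t it
   remains to bound E sum_t |y_t| by sqrt (T E sum_t y_t^2): this is
   Cauchy-Schwarz, obtained by integrating |y| <= y^2 / (2c) + c / 2 and
   choosing c = sqrt (E sum_t y_t^2 / T). *)

Lemma sum_episodes (R : pzSemiRingType) (T : nat) (f : nat -> R) :
  \sum_(j < num_episodes T) (episode_length T j)%:R * f j =
  \sum_(1 <= t < T.+1) f (episode_of t).
Proof.
under eq_bigr => j _ do rewrite natr_sum mulr_suml.
rewrite exchange_big big_nat_cond [RHS]big_nat_cond /=.
apply: eq_bigr => t /andP[/andP[t_ge1 t_leT] _].
have t_ep : (episode_of t < num_episodes T)%N.
  by rewrite ltnS leq_trunc_log // -ltnS.
rewrite (bigD1 (Ordinal t_ep)) //= eqxx mul1r big1 ?addr0 // => j j_neq.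
suff /negbTE -> : episode_of t != j by rewrite mul0r.
by apply: contra j_neq => /eqP t_j; rewrite -val_eqE /= t_j.
Qed.

Lemma abs_le_amgm (R : realFieldType) (y c : R) : 0 < c -> `|y| <= y ^+ 2 / (2 * c) + c / 2.
Proof.
move=> c_gt0; rewrite -real_normK ?num_real //.
have gap : `|y| ^+ 2 / (2 * c) + c / 2 - `|y| = (`|y| - c) ^+ 2 / (2 * c).
  by field; lra.
have : 0 <= (`|y| - c) ^+ 2 / (2 * c) by rewrite divr_ge0 ?sqr_ge0 //; lra.
by rewrite -gap subr_ge0.
Qed.

Lemma sum_abs_le_amgm (R : realFieldType) (T : nat) (c : R) (y : nat -> R) : 0 < c ->
  \sum_(1 <= t < T.+1) `|y t| <= (\sum_(1 <= t < T.+1) y t ^+ 2) / (2 * c) + T%:R * c / 2.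
Proof.
move=> c_gt0; apply: le_trans.
  by apply: ler_sum => t _; exact: abs_le_amgm c_gt0.
by rewrite big_split /= -mulr_suml sumr_const_nat subn1 /= -[_ *+ T]mulr_natl mulrA.
Qed.

Lemma le_mul_sqrt_of_amgm (R : rcfType) (K t r e : R) : 0 <= K -> 0 < t -> 0 <= r ->
  (forall c, 0 < c -> e <= K / (2 * c) * r + K * t * c / 2) ->
  e <= K * Num.sqrt (t * r).
Proof.
move=> K_ge0 t_gt0 r_ge0 amgm; have [r0|r_neq0] := eqVneq r 0.
  rewrite r0 mulr0 sqrtr0 mulr0; apply/ler_addgt0Pr => eps eps_gt0; rewrite add0r.
  have Kt_ge0 : 0 <= K * t by rewrite mulr_ge0 // ltW.
  have c_gt0 : 0 < 2 * eps / (K * t + 1) by rewrite divr_gt0 //; lra.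
  apply: le_trans (amgm _ c_gt0) _; rewrite r0 mulr0 add0r.
  rewrite (_ : K * t * _ / 2 = eps * (K * t / (K * t + 1))); last by field; lra.
  by apply: ler_piMr; [exact: ltW | rewrite ler_pdivrMr ?mul1r; lra].
have r_gt0 : 0 < r by rewrite lt_neqAle eq_sym r_neq0.
set s := Num.sqrt (t * r).
have s_gt0 : 0 < s by rewrite sqrtr_gt0 mulr_gt0.
have optimum : K / (2 * (s / t)) * r + K * t * (s / t) / 2 = K * s.
  have -> : r = s ^+ 2 / t by rewrite sqr_sqrtr ?mulr_ge0 ?ltW //; field; rewrite gt_eqF.
  by field; rewrite !gt_eqF.
by rewrite -optimum; exact: amgm (divr_gt0 s_gt0 t_gt0).
Qed.

Lemma le_mul_sqrte_of_amgm (R : rcfType) (K t : R) (q e : \bar R) :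
  0 <= K -> 0 < t -> (0 <= q)%E ->
  (forall c, 0 < c -> (e <= (K / (2 * c))%:E * q + (K * t * c / 2)%:E)%E) ->
  (e <= K%:E * sqrte (t%:E * q))%E.
Proof.
move=> K_ge0 t_gt0; case: q => [r | | //] + amgm => [r_ge0 | _].
  case: e amgm => [e | | ] amgm; last by rewrite leNye.
    by rewrite -EFinM /= lee_fin; apply: le_mul_sqrt_of_amgm.
  by have := amgm 1 ltr01; rewrite -EFinM -EFinD leye_eq.
have [K0|K_gt0] := eqVneq K 0.
  by have := amgm 1 ltr01; rewrite K0 !mul0r mul0e adde0 mul0e.
by rewrite gt0_muley ?lte_fin //= gt0_muley ?leey // lte_fin lt_neqAle eq_sym K_gt0.
Qed.

Lemma abs_eq0_of_le_neg_mul (R : realDomainType) (K u v : R) :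
  K < 0 -> `|u| <= K * `|v| -> u = 0 /\ v = 0.
Proof.
move=> K_lt0 uv; have v0 : v = 0.
  by apply/eqP; rewrite -normr_le0; have := normr_ge0 u; have := normr_ge0 v; nra.
by split => //; apply/eqP; rewrite -normr_le0; move: uv; rewrite v0 normr0 mulr0.
Qed.

Lemma le_abse_fine (R : realDomainType) (e : \bar R) : ((`|fine e|)%:E <= `|e|)%E.
Proof. by case: e => [r | | ] /=; rewrite ?leey. Qed.

Lemma abs_Rintegral_mul_le d (X : measurableType d) (R : realType)
    (mu : {measure set X -> \bar R}) (f g : X -> R) (H : R) :
    measurable_fun setT f -> measurable_fun setT g ->
    0 <= H -> (forall y, `|g y| <= H) ->
  ((`|Rintegral mu setT (fun y => f y * g y)|)%:E <= H%:E * \int[mu]_y `|f y|%:E)%E.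
Proof.
move=> mf mg H_ge0 g_le; rewrite /Rintegral; apply: le_trans; first exact: le_abse_fine.
have mfg : measurable_fun setT (fun y => f y * g y) by exact: measurable_funM.
have mabsf : measurable_fun setT (fun y => (`|f y|)%:E).
  by apply/measurable_EFinP; exact: measurableT_comp.
apply: le_trans (le_abse_integral _ _ _) _ => //; first exact/measurable_EFinP.
rewrite -ge0_integralZl_EFin //; apply: ge0_le_integral => //.
- by apply: measurableT_comp => //; exact/measurable_EFinP.
- exact: measurable_funeM.
by move=> y _; rewrite /= -EFinM lee_fin normrM mulrC ler_wpM2r.
Qed.

Section Delta_bound.
Context d (X : measurableType d) (R : realType) (A : Type) (mu : {measure set X -> \bar R}).
Variables (Theta : set R) (P : X -> A -> R -> X -> R) (h : X -> R -> R) (C H : R).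
Hypothesis mP : forall x a th, Theta th -> measurable_fun setT (P x a th).
Hypothesis P_lipschitz : forall x a th th', Theta th -> Theta th' ->
  (\int[mu]_y `|P x a th y - P x a th' y|%:E <= (C * `|th - th'|)%:E)%E.
Hypothesis mh : forall th, Theta th -> measurable_fun setT (h^~ th).
Hypothesis h_bound : forall y th, Theta th -> 0 <= h y th <= H.

Lemma abs_Delta_le x a th th' : Theta th -> Theta th' ->
  `|Delta mu P h x a th th'| <= C * H * `|th - th'|.
Proof.
move=> th_Theta th'_Theta; have /andP[h_ge0 h_le] := h_bound x _ th'_Theta.
have H_ge0 : 0 <= H := le_trans h_ge0 h_le.
rewrite -lee_fin (mulrC C) -mulrA EFinM; apply: le_trans.
  apply: (@abs_Rintegral_mul_le _ _ _ _ _ _ H) => //.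
  - by apply: measurable_funB; exact: mP.
  - exact: mh.
  - by move=> y; have /andP[hy_ge0 hy_le] := h_bound y _ th'_Theta; rewrite ger0_norm.
by rewrite lee_wpmul2l ?lee_fin //; exact: P_lipschitz.
Qed.

End Delta_bound.

Section expectation_bounds.
Context dO (Omega : measurableType dO) (R : realType) (Pr : probability Omega R).

Lemma expectation_le_ge0 (f g : Omega -> R) :
    measurable_fun setT f -> measurable_fun setT g ->
    (forall w, 0 <= g w) -> (forall w, f w <= g w) ->
  ('E_Pr[f] <= 'E_Pr[g])%E.
Proof.
move=> mf mg g_ge0 f_le_g; rewrite !expectation.unlock [X in (X <= _)%E]integralE.
rewrite -[X in (_ <= X)%E]sube0; apply: leeB.
  apply: ge0_le_integral => //.
  - by apply: measurable_funepos; exact/measurable_EFinP.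
  - exact/measurable_EFinP.
  by move=> w _; rewrite funeposE /= ge_max !lee_fin f_le_g g_ge0.
by apply: integral_ge0 => w _; exact: funeneg_ge0.
Qed.

Lemma expectation_affine_ge0 (g : Omega -> R) (a b : R) :
    measurable_fun setT g -> (forall w, 0 <= g w) -> 0 <= a -> 0 <= b ->
  ('E_Pr[fun w => (a * g w + b)%R] = a%:E * 'E_Pr[g] + b%:E)%E.
Proof.
move=> mg g_ge0 a_ge0 b_ge0; rewrite !expectation.unlock.
under eq_integral do rewrite EFinD EFinM.
rewrite ge0_integralD //; last 2 first.
- by move=> w _; rewrite mule_ge0 ?lee_fin.
- by apply: measurable_funeM; exact/measurable_EFinP.
rewrite ge0_integralZl_EFin //; last 2 first.
- by move=> w _; rewrite lee_fin.
- exact/measurable_EFinP.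
by rewrite integral_cst //= probability_setT mule1.
Qed.

Variables (T : nat) (K : R) (D y : nat -> Omega -> R).
Hypothesis mD : measurable_fun setT (fun w => \sum_(1 <= t < T.+1) D t w).
Hypothesis my : forall t, measurable_fun setT (y t).
Hypothesis D_le : forall t w, (1 <= t <= T)%N -> `|D t w| <= K * `|y t w|.

Lemma expectation_sum_le_amgm : 0 <= K -> forall c, 0 < c ->
  ('E_Pr[fun w => (\sum_(1 <= t < T.+1) D t w)%R] <=
   (K / (2 * c))%:E * 'E_Pr[fun w => (\sum_(1 <= t < T.+1) y t w ^+ 2)%R]
   + (K * T%:R * c / 2)%:E)%E.
Proof.
move=> K_ge0 c c_gt0; set Q := fun w => \sum_(1 <= t < T.+1) y t w ^+ 2.
have mQ : measurable_fun setT Q.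
  by apply: measurable_sum => t; exact: measurable_funX.
have Q_ge0 w : 0 <= Q w by apply: sumr_ge0 => t _; exact: sqr_ge0.
have a_ge0 : 0 <= K / (2 * c) by rewrite divr_ge0 // mulr_ge0 // ltW.
have b_ge0 : 0 <= K * T%:R * c / 2 by rewrite divr_ge0 // !mulr_ge0 // ltW.
rewrite -expectation_affine_ge0 //; apply: expectation_le_ge0 => // [|w|w].
- by apply: measurable_funD => //; exact: measurable_funM.
- by rewrite addr_ge0 // mulr_ge0.
have -> : K / (2 * c) * Q w + K * T%:R * c / 2 = K * (Q w / (2 * c) + T%:R * c / 2) by ring.
apply: le_trans (_ : _ <= K * \sum_(1 <= t < T.+1) `|y t w|) _.
  rewrite mulr_sumr !big_nat; apply: ler_sum => t t_range.
  exact: le_trans (ler_norm _) (D_le _ _ t_range).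
by rewrite ler_wpM2l //; exact: sum_abs_le_amgm.
Qed.

Lemma expectation_sum_le_sqrt :
  ('E_Pr[fun w => (\sum_(1 <= t < T.+1) D t w)%R] <=
   K%:E * sqrte (T%:R%:E * 'E_Pr[fun w => (\sum_(1 <= t < T.+1) y t w ^+ 2)%R]))%E.
Proof.
have [T0|T_gt0] := posnP T.
  rewrite T0 mul0e sqrte0 mule0 (_ : (fun w => _) = cst 0) ?expectation_cst //.
  by apply/funext => w; rewrite big_geq.
have [K_lt0|K_ge0] := ltP K 0; last first.
  apply: le_mul_sqrte_of_amgm => //; first by rewrite ltr0n.
    by apply: expectation_ge0 => w; apply: sumr_ge0 => t _; exact: sqr_ge0.
  exact: expectation_sum_le_amgm.
have vanish t w : (1 <= t <= T)%N -> D t w = 0 /\ y t w = 0.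
  by move=> t_range; exact: abs_eq0_of_le_neg_mul K_lt0 (D_le _ _ t_range).
have -> : (fun w => \sum_(1 <= t < T.+1) D t w) = cst 0.
  by apply/funext => w; rewrite big_nat big1 // => t /(vanish _ w)[].
have -> : (fun w => \sum_(1 <= t < T.+1) y t w ^+ 2) = cst 0.
  by apply/funext => w; rewrite big_nat big1 // => t /(vanish _ w)[_ ->]; rewrite expr0n.
by rewrite !expectation_cst mule0 sqrte0 mule0.
Qed.

End expectation_bounds.
Theorem lemma3
  (R : realType) (d : measure_display) (X : measurableType d) (A : Type)
  (mu : {measure set X -> \bar R})
  (Theta : set R)
  (P : X -> A -> R -> X -> R)            (* transition densities P(y | x,a,theta) *)
  (loss : X -> A -> R)                   (* known loss *)
  (J : R -> R) (h : X -> R -> R)         (* optimal average cost, differential value fn *)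
  (pi : X -> R -> A)                     (* optimal action for parameter theta at state x *)
  (C H : R)
  (dO : measure_display) (Omega : measurableType dO) (Pr : probability Omega R)
  (th_star : Omega -> R)                 (* true parameter (random, drawn from the prior) *)
  (th_tilde : nat -> Omega -> R)         (* parameter used at time t *)
  (x : nat -> Omega -> X) (a : nat -> Omega -> A)   (* states and actions *)
  (T : nat) :
  (* transition kernels: probability densities w.r.t. mu *)
  (forall x0 a0 th, Theta th ->
     measurable_fun setT (P x0 a0 th) /\ (forall y, 0 <= P x0 a0 th y) /\
     (\int[mu]_y (P x0 a0 th y)%:E = 1)%E) ->
  (* Lipschitz condition in L1 *)
  (forall x0 a0 th th', Theta th -> Theta th' ->
     (\int[mu]_y `|P x0 a0 th y - P x0 a0 th' y|%:E <= (C * `|th - th'|)%:E)%E) ->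
  (* h(., theta) is the differential value function (average-cost Bellman
     optimality equation), pi x theta an optimal action, and h in [0, H] *)
  (forall th, Theta th -> measurable_fun setT (h^~ th)) ->
  (forall y th, Theta th -> 0 <= h y th <= H) ->
  (forall th x0, Theta th ->
     J th + h x0 th = loss x0 (pi x0 th) + Rintegral mu setT (fun y => P x0 (pi x0 th) th y * h y th)
     /\ forall a0, J th + h x0 th <= loss x0 a0 + Rintegral mu setT (fun y => P x0 a0 th y * h y th)) ->
  (* the random quantities generated by DS-PSRL *)
  measurable_fun setT th_star ->
  (forall t, measurable_fun setT (th_tilde t)) ->
  (forall w, Theta (th_star w)) ->
  (forall t w, (1 <= t)%N -> Theta (th_tilde t w)) ->
  (* doubling schedule: resample at t = 1,2,4,..., otherwise keep *)
  (forall t w, (1 <= t)%N -> th_tilde t w = th_tilde (2 ^ episode_of t)%N w) ->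
  (* play the optimal action for the sampled parameter *)
  (forall t w, (1 <= t)%N -> a t w = pi (x t w) (th_tilde t w)) ->
  measurable_fun setT (fun w => \sum_(1 <= t < T.+1)
                         Delta mu P h (x t w) (a t w) (th_star w) (th_tilde t w)) ->
  ('E_Pr[fun w => (\sum_(1 <= t < T.+1)
                    Delta mu P h (x t w) (a t w) (th_star w) (th_tilde t w))%R]
   <= (C * H)%:E *
      sqrte ((T%:R)%:E *
        'E_Pr[fun w => (\sum_(j < num_episodes T)
                 (episode_length T j)%:R * (th_star w - th_tilde (2 ^ j)%N w) ^+ 2)%R]))%E.
Proof.
(* The bound on Delta_t holds whatever action is played. *)
move=> P_density P_lipschitz mh h_bound _ mth_star mth_tilde th_star_Theta th_tilde_Theta
  schedule _ mDelta.
have mP x0 a0 th : Theta th -> measurable_fun setT (P x0 a0 th).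
  by case/(P_density x0 a0 th).
have -> : (fun w => \sum_(j < num_episodes T)
      (episode_length T j)%:R * (th_star w - th_tilde (2 ^ j)%N w) ^+ 2) =
    (fun w => \sum_(1 <= t < T.+1) (th_star w - th_tilde t w) ^+ 2).
  apply/funext => w; rewrite (sum_episodes _ _ (fun j => (th_star w - th_tilde (2 ^ j)%N w) ^+ 2)).
  by rewrite !big_nat; apply: eq_bigr => t /andP[t_ge1 _]; rewrite -schedule.
apply: (@expectation_sum_le_sqrt _ _ _ Pr T (C * H)
  (fun t w => Delta mu P h (x t w) (a t w) (th_star w) (th_tilde t w))
  (fun t w => th_star w - th_tilde t w)) => // [t | t w /andP[t_ge1 _]].
  exact: measurable_funB.
by apply: (@abs_Delta_le _ _ _ _ _ Theta) => //; exact: th_tilde_Theta.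
Qed.
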